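(* Let $0<b_i\le a_i\le 1$ for $i=1,2$ and let $\mathcal{R}=\mathcal{R}_1\cup\mathcal{R}_2$ with $$\mathcal{R}_1=\left\{(\lambda_1,\lambda_2)\in\mathbb{R}_{\ge0}^2:\ \frac{\lambda_1}{a_1}+\frac{(a_1-b_1)\lambda_2}{a_1 b_2}<1,\ \lambda_2<b_2\right\},\quad \mathcal{R}_2=\left\{(\lambda_1,\lambda_2)\in\mathbb{R}_{\ge0}^2:\ \frac{\lambda_2}{a_2}+\frac{(a_2-b_2)\lambda_1}{a_2 b_1}<1,\ \lambda_1<b_1\right\}.$$ If $$\frac{b_1}{a_1}+\frac{b_2}{a_2}\ge 1,$$ then $\mathcal{R}$ is a convex set; when equality holds, $\mathcal{R}$ is the triangle $\{(\lambda_1,\lambda_2)\in\mathbb{R}_{\ge0}^2:\lambda_1/a_1+\lambda_2/a_2<1\}$ (the time-sharing region).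
   Context: $\mathcal{R}$ is the stability region of the two-user interference channel with bursty traffic, where $a_i$ is the probability that destination $D_i$ decodes the packet of source $S_i$ when only $S_i$ transmits and $b_i$ is the corresponding probability when both sources transmit. *)

From Stdlib Require Import Reals Lra.
Open Scope R_scope.

Definition region1 (a1 b1 a2 b2 l1 l2 : R) : Prop :=
  0 <= l1 /\ 0 <= l2 /\
  l1 / a1 + (a1 - b1) * l2 / (a1 * b2) < 1 /\ l2 < b2.

Definition region2 (a1 b1 a2 b2 l1 l2 : R) : Prop :=
  0 <= l1 /\ 0 <= l2 /\
  l2 / a2 + (a2 - b2) * l1 / (a2 * b1) < 1 /\ l1 < b1.

Definition stab_region (a1 b1 a2 b2 l1 l2 : R) : Prop :=
  region1 a1 b1 a2 b2 l1 l2 \/ region2 a1 b1 a2 b2 l1 l2.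

Definition convex2 (S : R -> R -> Prop) : Prop :=
  forall x1 x2 y1 y2 t, S x1 x2 -> S y1 y2 -> 0 <= t <= 1 ->
    S (t * x1 + (1 - t) * y1) (t * x2 + (1 - t) * y2).

Definition time_sharing (a1 a2 l1 l2 : R) : Prop :=
  0 <= l1 /\ 0 <= l2 /\ l1 / a1 + l2 / a2 < 1.

(* Once [b1/a1 + b2/a2 >= 1], each of the two polytopes R_1, R_2 lies inside
   the other's defining half-plane, so the union R_1 ∪ R_2 is the intersection
   of the nonnegative quadrant with the two half-planes
     b2 l1 + (a1 - b1) l2 < a1 b2   and   b1 l2 + (a2 - b2) l1 < a2 b1,
   which is convex.  On the boundary [b1/a1 + b2/a2 = 1] both half-planes are
   the time-sharing half-plane [l1/a1 + l2/a2 < 1]. *)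

From Stdlib Require Import Reals Lra Psatz.
Open Scope R_scope.

Lemma Rdiv_lt_1_iff (x p : R) : 0 < p -> (x / p < 1 <-> x < p).
Proof.
  intros Hp; split; intro H.
  - replace x with (x / p * p) by (field; lra); nra.
  - apply (Rmult_lt_reg_r p); [lra|].
    replace (x / p * p) with x by (field; lra); lra.
Qed.

Lemma Rdiv_ge_1_iff (x p : R) : 0 < p -> (x / p >= 1 <-> p <= x).
Proof.
  intros Hp; pose proof (Rdiv_lt_1_iff x p Hp) as Hlt.
  split; intro H; destruct (Rlt_le_dec x p); lra.
Qed.

Lemma Rdiv_eq_1_iff (x p : R) : 0 < p -> (x / p = 1 <-> x = p).
Proof.
  intros Hp; split; intro H.
  - replace x with (x / p * p) by (field; lra); rewrite H; ring.
  - subst x; field; lra.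
Qed.

Lemma sum_ratios (b1 a1 b2 a2 : R) : a1 <> 0 -> a2 <> 0 ->
  b1 / a1 + b2 / a2 = (b1 * a2 + b2 * a1) / (a1 * a2).
Proof. intros; field; auto. Qed.

Lemma convex2_lin_lt (p q c : R) : convex2 (fun x y => p * x + q * y < c).
Proof.
  intros x1 x2 y1 y2 t Hx Hy Ht.
  replace (p * (t * x1 + (1 - t) * y1) + q * (t * x2 + (1 - t) * y2))
    with (t * (p * x1 + q * x2) + (1 - t) * (p * y1 + q * y2)) by ring.
  destruct (Req_dec t 0) as [->|Ht0]; nra.
Qed.

Lemma convex2_quadrant : convex2 (fun x y => 0 <= x /\ 0 <= y).
Proof. intros x1 x2 y1 y2 t Hx Hy Ht; split; nra. Qed.

Lemma convex2_swap (S : R -> R -> Prop) : convex2 S -> convex2 (fun x y => S y x).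
Proof. intros HS x1 x2 y1 y2 t Hx Hy Ht; exact (HS x2 x1 y2 y1 t Hx Hy Ht). Qed.

Lemma convex2_and (S T : R -> R -> Prop) :
  convex2 S -> convex2 T -> convex2 (fun x y => S x y /\ T x y).
Proof.
  intros HS HT x1 x2 y1 y2 t [Sx Tx] [Sy Ty] Ht; split; [apply HS | apply HT]; auto.
Qed.

Lemma convex2_ext (S T : R -> R -> Prop) :
  (forall x y, S x y <-> T x y) -> convex2 S -> convex2 T.
Proof. intros HST HS x1 x2 y1 y2 t Hx Hy Ht; apply HST, HS; try apply HST; auto. Qed.

(* The linear constraint of R_1, cleared of denominators; the constraint of
   R_2 is [rate_halfplane a2 b2 b1 l2 l1]. *)
Definition rate_halfplane (a1 b1 b2 l1 l2 : R) : Prop :=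
  b2 * l1 + (a1 - b1) * l2 < a1 * b2.

Definition rate_polygon (a1 b1 a2 b2 l1 l2 : R) : Prop :=
  (0 <= l1 /\ 0 <= l2) /\
  rate_halfplane a1 b1 b2 l1 l2 /\ rate_halfplane a2 b2 b1 l2 l1.

Lemma convex2_rate_polygon (a1 b1 a2 b2 : R) : convex2 (rate_polygon a1 b1 a2 b2).
Proof.
  apply convex2_and; [exact convex2_quadrant|].
  apply convex2_and; [apply convex2_lin_lt|].
  apply (convex2_swap (fun x y => b1 * x + (a2 - b2) * y < a2 * b1)), convex2_lin_lt.
Qed.

Lemma region1_iff (a1 b1 a2 b2 l1 l2 : R) : 0 < a1 -> 0 < b2 ->
  region1 a1 b1 a2 b2 l1 l2 <->
  (0 <= l1 /\ 0 <= l2) /\ rate_halfplane a1 b1 b2 l1 l2 /\ l2 < b2.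
Proof.
  intros Ha1 Hb2; unfold region1, rate_halfplane.
  replace (l1 / a1 + (a1 - b1) * l2 / (a1 * b2))
    with ((b2 * l1 + (a1 - b1) * l2) / (a1 * b2)) by (field; lra).
  rewrite Rdiv_lt_1_iff by nra; tauto.
Qed.

Lemma region2_iff_region1 (a1 b1 a2 b2 l1 l2 : R) :
  region2 a1 b1 a2 b2 l1 l2 <-> region1 a2 b2 a1 b1 l2 l1.
Proof. unfold region1, region2; tauto. Qed.

Lemma rate_halfplane_swap (a1 b1 a2 b2 l1 l2 : R) :
  0 < b1 -> 0 < b2 -> b2 <= a2 -> a1 * a2 <= b1 * a2 + b2 * a1 ->
  l2 < b2 -> rate_halfplane a1 b1 b2 l1 l2 -> rate_halfplane a2 b2 b1 l2 l1.
Proof.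
  unfold rate_halfplane; intros Hb1 Hb2 Hba2 Hcond Hl2 H.
  assert (E : b2 * (b1 * l2 + (a2 - b2) * l1 - a2 * b1) =
              (a2 - b2) * (b2 * l1 + (a1 - b1) * l2 - a1 * b2)
              + (a2 * b1 + a1 * b2 - a1 * a2) * (l2 - b2)) by ring.
  destruct (Req_dec a2 b2) as [<-|Hne]; nra.
Qed.

Lemma rate_halfplane_lt (a1 b1 b2 l1 l2 : R) :
  0 < b2 -> b1 <= a1 -> b2 <= l2 -> rate_halfplane a1 b1 b2 l1 l2 -> l1 < b1.
Proof. unfold rate_halfplane; intros; nra. Qed.

Lemma stab_region_iff_rate_polygon (a1 b1 a2 b2 l1 l2 : R) :
  0 < b1 -> b1 <= a1 -> 0 < b2 -> b2 <= a2 -> a1 * a2 <= b1 * a2 + b2 * a1 ->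
  stab_region a1 b1 a2 b2 l1 l2 <-> rate_polygon a1 b1 a2 b2 l1 l2.
Proof.
  intros Hb1 Hba1 Hb2 Hba2 Hcond; unfold stab_region, rate_polygon.
  rewrite region2_iff_region1, !region1_iff by lra.
  split.
  - intros [(Hnn & H1 & Hl2) | (Hnn & H2 & Hl1)]; split; try tauto.
    + split; [|apply (rate_halfplane_swap a1 b1 a2 b2)]; auto.
    + split; [apply (rate_halfplane_swap a2 b2 a1 b1)|]; auto; lra.
  - intros (Hnn & H1 & H2).
    destruct (Rlt_le_dec l2 b2) as [Hl2|Hl2]; [left; tauto | right].
    split; [tauto|]; split; [exact H2 | apply (rate_halfplane_lt a1 b1 b2 l1 l2)]; auto.
Qed.

Lemma rate_halfplane_boundary (a1 b1 a2 b2 l1 l2 : R) :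
  0 < b2 -> 0 < a2 -> b1 * a2 + b2 * a1 = a1 * a2 ->
  rate_halfplane a1 b1 b2 l1 l2 <-> l1 * a2 + l2 * a1 < a1 * a2.
Proof.
  unfold rate_halfplane; intros Hb2 Ha2 Heq.
  assert (E : a2 * (b2 * l1 + (a1 - b1) * l2 - a1 * b2) =
              b2 * (l1 * a2 + l2 * a1 - a1 * a2)
              + l2 * (a1 * a2 - (b1 * a2 + b2 * a1))) by ring.
  rewrite Heq, Rminus_diag, Rmult_0_r, Rplus_0_r in E.
  split; intro; nra.
Qed.

Theorem mainTheorem5 (a1 b1 a2 b2 : R)
  (hb1 : 0 < b1) (hba1 : b1 <= a1) (ha1 : a1 <= 1)
  (hb2 : 0 < b2) (hba2 : b2 <= a2) (ha2 : a2 <= 1) :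
  (b1 / a1 + b2 / a2 >= 1 -> convex2 (stab_region a1 b1 a2 b2)) /\
  (b1 / a1 + b2 / a2 = 1 ->
     forall l1 l2, stab_region a1 b1 a2 b2 l1 l2 <-> time_sharing a1 a2 l1 l2).
Proof.
  assert (Ha12 : 0 < a1 * a2) by nra.
  rewrite sum_ratios, Rdiv_ge_1_iff, Rdiv_eq_1_iff by lra.
  split.
  - intro Hcond.
    apply (convex2_ext (rate_polygon a1 b1 a2 b2)); [|apply convex2_rate_polygon].
    intros; symmetry; apply stab_region_iff_rate_polygon; auto.
  - intros Heq l1 l2.
    rewrite stab_region_iff_rate_polygon by lra.
    unfold rate_polygon, time_sharing.
    rewrite (rate_halfplane_boundary a1 b1 a2 b2), (rate_halfplane_boundary a2 b2 a1 b1)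
      by lra.
    replace (l1 / a1 + l2 / a2) with ((l1 * a2 + l2 * a1) / (a1 * a2)) by (field; lra).
    rewrite Rdiv_lt_1_iff by lra.
    split; [|split]; try tauto; lra.
Qed.
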